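(* Let $m=m_n\ge1$ and $F=F_n$ be such that $(F)_2\lesssim(F)_0$ and $\mu=\log n-\frac mn(F)_1\to-\infty$ as $n\to\infty$. Then $H^*_{nmF}$ is connected with probability tending to one.
   Context: Shotgun random hypergraph: given integers $n,m\ge1$ and probability distributions $f^{(1)},\dots,f^{(m)}$ on $\{0,\dots,n\}$, write $F=f^{(1)}\times\cdots\times f^{(m)}$. $H^*_{nmF}$ is the random hypergraph with node set $\{1,\dots,n\}$ and hyperedge set $\{V_1,\dots,V_m\}$, where $V_1,\dots,V_m\subset\{1,\dots,n\}$ are mutually independent and $\mathbb{P}(V_k=A)=f^{(k)}(|A|)\binom{n}{|A|}^{-1}$. A hypergraph on node set $V$ is connected if for every partition of $V$ into nonempty sets $V_1',V_2'$ some hyperedge meets both. Moments: $(F)_r=\frac1m\sum_{k=1}^m\sum_{x=2}^n x^r f^{(k)}(x)$. $a_n\lesssim b_n$ means $\limsup a_n/|b_n|<\infty$. *)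

From HB Require Import structures.
From mathcomp Require Import all_boot all_order all_algebra.
From mathcomp Require Import all_classical all_reals all_analysis.
Set Implicit Arguments. Unset Strict Implicit. Unset Printing Implicit Defensive.
Import Order.TTheory GRing.Theory Num.Theory.
Local Open Scope ring_scope.

Definition hconnected (n m : nat) (A : {ffun 'I_m -> {set 'I_n}}) : bool :=
  [forall S : {set 'I_n},
     ((S != finset.set0) && (~: S != finset.set0)) ==>
     [exists k : 'I_m, (A k :&: S != finset.set0) && (A k :&: ~: S != finset.set0)]].

(* f k x = f^(k)(x) : distribution of the size of hyperedge k on {0,...,n}. *)
Definition is_size_distr (R : realType) (n : nat) (g : nat -> R) : Prop :=
  (forall x, (x <= n)%N -> 0 <= g x) /\ \sum_(x < n.+1) g x = 1.

(* P(V_1 = A_1, ..., V_m = A_m) = prod_k f^(k)(|A_k|) / C(n, |A_k|) *)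
Definition shotgun_weight (R : realType) (n m : nat) (f : nat -> nat -> R)
    (A : {ffun 'I_m -> {set 'I_n}}) : R :=
  \prod_(k < m) (f k #|A k| / ('C(n, #|A k|))%:R).

Definition prob_connected (R : realType) (n m : nat) (f : nat -> nat -> R) : R :=
  \sum_(A : {ffun 'I_m -> {set 'I_n}} | hconnected A) shotgun_weight f A.

Definition moment (R : realType) (n m : nat) (f : nat -> nat -> R) (r : nat) : R :=
  (m%:R)^-1 * \sum_(k < m) \sum_(2 <= x < n.+1) (x%:R) ^+ r * f k x.

From HB Require Import structures.
From mathcomp Require Import all_boot all_order all_algebra.
From mathcomp Require Import all_classical all_reals all_analysis.
From mathcomp Require Import ring lra zify.
Import Order.TTheory GRing.Theory Num.Theory numFieldNormedType.Exports.
Local Open Scope ring_scope.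

(* A hypergraph is disconnected iff some cut (S, ~: S) is crossed by no
   hyperedge, and up to complementation 0 < |S| <= n/2 ("small cut").  By the
   union bound and independence of the hyperedges,
     P(disconnected) <= sum_{S small} prod_k P(V_k does not cross S)
                     <= sum_{S small} exp(- sum_k sum_x f^(k)(x) (1 - y^x - (1-y)^x)),
   where y = |S|/n, since an x-set missing the cut lies inside S or ~: S.
   Writing M_r = m (F)_r and lambda = M_1 / n, a quadratic and a linear lower
   bound on 1 - y^x - (1-y)^x, together with M_2 <= C M_0 and 2 M_r <= M_{r+1},
   give for each size s:  C(n, s) P(S missed) <= a^s + b^s  with
   a = e n e^-lambda and b = e C lambda e^(-2 lambda / C) (the first bound
   handles s <= n/(C lambda), the second uses s^s <= e^s s!).  Summing the
   geometric series, P(disconnected) <= 2a + 2b, and mu = ln n - lambda -> -oo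
   makes both rates tend to 0.  The file proves the elementary inequalities,
   the binomial bounds, the per-size estimate, the cut counting for the
   shotgun model, and finally the theorem. *)

Section ElementaryBounds.
Variable R : realType.

Lemma expr_1B_le_quad (y : R) x : 0 <= y -> y <= 1 ->
  (1 - y) ^+ x <= 1 - x%:R * y + x%:R ^+ 2 * y ^+ 2.
Proof.
move=> y0 y1; elim: x => [|x IH].
  by rewrite expr0 expr0n /= !mul0r subr0 addr0.
rewrite exprS -addn1 natrD.
have x0 : (0 : R) <= x%:R by [].
apply: le_trans (ler_wpM2l _ IH) _; first lra.
set X := x%:R; nra.
Qed.

(* 1 - y^x - (1-y)^x approximates the probability that an x-set splits a cut
   of relative size y; it is bounded below quadratically ... *)
Lemma split_prob_ge_quad (y : R) x : 0 <= y -> y <= 1 -> (2 <= x)%N ->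
  x%:R * y - 2 * x%:R ^+ 2 * y ^+ 2 <= 1 - y ^+ x - (1 - y) ^+ x.
Proof.
move=> y0 y1 x2.
have h1 := expr_1B_le_quad y x y0 y1.
have h2 : y ^+ x <= y ^+ 2 by apply: ler_wiXn2l.
have X1 : (1 : R) <= x%:R by rewrite ler1n; apply: leq_trans x2.
set X := x%:R in h1 X1 *.
have : y ^+ 2 <= X ^+ 2 * y ^+ 2.
  rewrite -[X in X <= _]mul1r; apply: ler_wpM2r; first exact: sqr_ge0.
  by rewrite -(expr1n _ 2); apply: lerXn2r => //; rewrite ?nnegrE //; lra.
lra.
Qed.

Lemma split_prob_ge_lin (y : R) x : 0 <= y -> 2 * y <= 1 -> (2 <= x)%N ->
  y <= 1 - y ^+ x - (1 - y) ^+ x.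
Proof.
move=> y0 y1 x2.
have h2 : y ^+ x <= y ^+ 2 by apply: ler_wiXn2l => //; lra.
have h3 : (1 - y) ^+ x <= (1 - y) ^+ 2 by apply: ler_wiXn2l => //; lra.
nra.
Qed.

(* (s+1)^s <= e s^s, i.e. (1 + 1/s)^s <= e. *)
Lemma succ_expr_le (s : nat) : ((s.+1)%:R : R) ^+ s <= expR 1 * (s%:R) ^+ s.
Proof.
case: s => [|s].
  by rewrite !expr0 mulr1; apply: le_trans (expR_ge1Dx 1); lra.
set t := (s.+1)%:R : R.
have t0 : 0 < t by rewrite /t ltr0n.
have -> : (s.+2)%:R = t * (1 + t^-1).
  by rewrite mulrDr mulr1 divff ?lt0r_neq0 // /t -natr1.
rewrite exprMn mulrC; apply: ler_wpM2r; first by rewrite exprn_ge0 // ltW.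
rewrite -{2}(mulfV (lt0r_neq0 t0)) /t expRM_natl -/t.
apply: lerXn2r; rewrite ?nnegrE ?expR_ge0 //.
  by rewrite addr_ge0 // invr_ge0 ltW.
exact: expR_ge1Dx.
Qed.

Lemma expr_self_le_fact (s : nat) : (s%:R : R) ^+ s <= expR (s%:R) * (s`!)%:R.
Proof.
elim: s => [|s IH]; first by rewrite expr0 expR0 mul1r.
rewrite exprS factS natrM -natr1 expRD mulrAC -mulrA.
have h1 := succ_expr_le s; rewrite -natr1 in h1.
have h2 : (s%:R + 1) ^+ s <= expR 1 * (expR s%:R * s`!%:R) :> R.
  by apply: le_trans h1 _; apply: ler_wpM2l; rewrite ?expR_ge0.
have s0 : (0 : R) <= s%:R + 1 by rewrite natr1.
apply: le_trans (ler_wpM2l s0 h2) _.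
by rewrite le_eqVlt; apply/orP; left; apply/eqP; ring.
Qed.

Lemma geometric_sum_le (a : R) N : 0 <= a -> 2 * a <= 1 ->
  \sum_(s < N) a ^+ s.+1 <= 2 * a.
Proof.
move=> a0 a1.
suff H : \sum_(s < N) a ^+ s.+1 + 2 * a ^+ N.+1 <= 2 * a.
  by apply: le_trans H; rewrite lerDl mulr_ge0 // exprn_ge0.
elim: N => [|N IH]; first by rewrite big_ord0 add0r expr1.
rewrite big_ord_recr /= -addrA; apply: le_trans IH; rewrite lerD2l.
have h : 0 <= a ^+ N.+1 by rewrite exprn_ge0.
rewrite (exprS a N.+1); nra.
Qed.

Lemma decay_rate_le (C l d : R) : 1 <= C -> 0 < d ->
  expR 1 * C ^+ 3 / (2 * d) <= l -> expR 1 * C * l * expR (- (2 * l / C)) <= d.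
Proof.
move=> C1 d0 hl.
have C0 : 0 < C by lra.
have e0 : 0 < expR 1 :> R by exact: expR_gt0.
have K0 : 0 < expR 1 * C ^+ 3 / (2 * d).
  by rewrite divr_gt0 ?mulr_gt0 ?exprn_gt0 //; lra.
have l0 : 0 < l by apply: lt_le_trans hl.
have x0 : 0 <= 2 * l / C by rewrite divr_ge0 //; lra.
have ex := expR_ge1Dxn 1 x0.
rewrite expRN; set E := expR (2 * l / C) in ex *.
have E0 : 0 < E by exact: expR_gt0.
rewrite ler_pdivrMr //.
have h1 : expR 1 * C ^+ 3 <= 2 * d * l by rewrite -ler_pdivrMl ?mulr_gt0 //; lra.
have h2 : (2 * l / C) ^+ 2 / (1.+1)`!%:R = 2 * l ^+ 2 / C ^+ 2.
  have -> : ((1.+1)`!%:R : R) = 2 by [].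
  by rewrite expr_div_n; field; rewrite lt0r_neq0.
rewrite h2 in ex.
have h3 : expR 1 * C * l <= d * (2 * l ^+ 2 / C ^+ 2).
  have CC : 0 < C ^+ 2 by rewrite exprn_gt0.
  rewrite mulrA ler_pdivlMr //.
  have -> : expR 1 * C * l * C ^+ 2 = expR 1 * C ^+ 3 * l by ring.
  apply: le_trans (ler_wpM2r (ltW l0) h1) _.
  by rewrite le_eqVlt; apply/orP; left; apply/eqP; ring.
apply: le_trans h3 _; rewrite ler_pM2l //; lra.
Qed.

End ElementaryBounds.

(* 'C(n, s) s! = n^_s <= n^s. *)
Lemma bin_fact_le_expn (n s : nat) : ('C(n, s) * s`! <= n ^ s)%N.
Proof.
have -> : (n ^ s = \prod_(i < s) n)%N by rewrite prod_nat_const card_ord.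
by rewrite bin_ffact ffact_prod; apply: leq_prod => i _; exact: leq_subr.
Qed.

(* For a <= n, C(a, x) / C(n, x) <= (a / n)^x, via a^_x n^x <= n^_x a^x. *)
Lemma bin_ratio_le (R : realType) (a n x : nat) : (a <= n)%N -> (0 < n)%N ->
  ('C(a, x))%:R / ('C(n, x))%:R <= ((a%:R : R) / n%:R) ^+ x.
Proof.
move=> an n0; have [xn|nx] := leqP x n; last first.
  by rewrite bin_small ?mul0r ?exprn_ge0 ?divr_ge0 //; apply: leq_ltn_trans nx.
have C0 : (0 : R) < ('C(n, x))%:R by rewrite ltr0n bin_gt0.
have N0 : (0 : R) < (n%:R) ^+ x by rewrite exprn_gt0 // ltr0n.
rewrite expr_div_n ler_pdivrMr // mulrAC ler_pdivlMr // [X in _ <= X]mulrC.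
rewrite -!natrX -!natrM ler_nat -(@leq_pmul2r x`!) ?fact_gt0 //.
rewrite mulnAC bin_ffact [X in (_ <= X)%N]mulnAC bin_ffact !ffact_prod.
have E c : (c ^ x = \prod_(i < x) c)%N by rewrite prod_nat_const card_ord.
rewrite !E -!big_split /=.
by apply: leq_prod => i _; have := ltn_ord i; nia.
Qed.

(* T stands for the probability that a fixed cut of size s is missed. *)
Section BinomialMass.
Variables (R : realType) (n s : nat) (C l T : R).
Hypothesis n_gt0 : (0 < n)%N.

(* For cuts of size s <= n / (C l): C(n, s) T <= (e n e^-l)^s, since
   C(n, s) <= n^s and the quadratic correction costs at most a factor e^s. *)
Lemma binomial_mass_le_small : C * l * s%:R <= n%:R ->
  T <= expR (- (l * s%:R - C * l * s%:R ^+ 2 / n%:R)) ->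
  ('C(n, s))%:R * T <= expR (1 + ln (n%:R : R) - l) ^+ s.
Proof.
move=> hs hT.
have nR : (0 : R) < n%:R by rewrite ltr0n.
have T_le : T <= expR (1 - l) ^+ s.
  rewrite -expRM_natl; apply: le_trans hT _; rewrite ler_expR.
  have : C * l * s%:R ^+ 2 / n%:R <= s%:R.
    rewrite ler_pdivrMr //.
    have := ler_wpM2r (ler0n R s) hs; rewrite expr2; lra.
  lra.
have bin_le : ('C(n, s))%:R <= (n%:R : R) ^+ s.
  rewrite -natrX ler_nat; apply: leq_trans (bin_fact_le_expn n s).
  by rewrite leq_pmulr ?fact_gt0.
apply: le_trans (ler_wpM2l (ler0n R _) T_le) _.
apply: le_trans (ler_wpM2r (exprn_ge0 _ (expR_ge0 _)) bin_le) _.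
rewrite -exprMn -[X in X * _](lnK nR) -expRD.
by rewrite le_eqVlt; apply/orP; left; apply/eqP; congr (expR _ ^+ _); lra.
Qed.

(* For cuts of size s > n / (C l): C(n, s) <= (e n / s)^s <= (e C l)^s. *)
Lemma binomial_mass_le_large : (0 < s)%N -> 0 < C -> 0 < l ->
  n%:R < C * l * s%:R -> T <= expR (- (2 * l * s%:R / C)) ->
  ('C(n, s))%:R * T <= (expR 1 * C * l * expR (- (2 * l / C))) ^+ s.
Proof.
move=> s0 C0 l0 hs hT.
have sR : (0 : R) < s%:R by rewrite ltr0n.
have T_le : T <= expR (- (2 * l / C)) ^+ s.
  by rewrite -expRM_natl; apply: le_trans hT _; rewrite ler_expR; lra.
apply: le_trans (ler_wpM2l (ler0n R _) T_le) _.
rewrite [X in _ <= X]exprMn; apply: ler_wpM2r; first by rewrite exprn_ge0 // expR_ge0.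
have ss0 : (0 : R) < s%:R ^+ s by rewrite exprn_gt0.
rewrite -(ler_pM2r ss0) -exprMn.
have bin_fact : ('C(n, s))%:R * (s`!)%:R <= (n%:R : R) ^+ s.
  by rewrite -natrM -natrX ler_nat bin_fact_le_expn.
apply: (@le_trans _ _ (('C(n, s))%:R * (expR s%:R * (s`!)%:R))).
  by apply: ler_wpM2l; rewrite ?expr_self_le_fact.
have -> : expR (s%:R) = expR 1 ^+ s :> R by rewrite -expRM_natl mulr1.
rewrite mulrCA; apply: le_trans (ler_wpM2l (exprn_ge0 _ (expR_ge0 _)) bin_fact) _.
have nR : (0 : R) < n%:R by rewrite ltr0n.
rewrite -exprMn; apply: lerXn2r; rewrite ?nnegrE ?mulr_ge0 ?expR_ge0 ?ltW //.
by rewrite -!mulrA ltr_pM2l ?expR_gt0 // !mulrA.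
Qed.

Lemma binomial_mass_le : (0 < s)%N -> 1 <= C -> 0 < l ->
  T <= expR (- (l * s%:R - C * l * s%:R ^+ 2 / n%:R)) ->
  T <= expR (- (2 * l * s%:R / C)) ->
  ('C(n, s))%:R * T <= expR (1 + ln (n%:R : R) - l) ^+ s
                       + (expR 1 * C * l * expR (- (2 * l / C))) ^+ s.
Proof.
move=> s0 C1 l0 hA hB.
have b0 : 0 <= expR 1 * C * l * expR (- (2 * l / C)).
  by rewrite !mulr_ge0 ?expR_ge0 // ltW //; lra.
have [hs|hs] := lerP (C * l * s%:R) n%:R.
  by apply: ler_wpDr; [rewrite exprn_ge0 | exact: binomial_mass_le_small].
apply: ler_wpDl; first by rewrite exprn_ge0 // expR_ge0.
by apply: binomial_mass_le_large => //; lra.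
Qed.

End BinomialMass.

(* A bound on mu = ln n - lambda that makes both rates at most d, for a moment
   ratio bound C. *)
Definition connectivity_threshold {R : realType} (C d : R) : R :=
  Num.min (ln d - 1) (- (expR 1 * C ^+ 3 / (2 * d))).

Section Shotgun.
Variables (R : realType) (n m : nat) (f : nat -> nat -> R).
Hypothesis f_distr : forall k, (k < m)%N -> is_size_distr n (f k).

Local Notation weight := (@shotgun_weight R n m f).

Lemma card_set_le (B : {set 'I_n}) : (#|B| <= n)%N.
Proof. by rewrite -[X in (_ <= X)%N](card_ord n); apply: max_card. Qed.

Lemma sum_by_card (P : pred {set 'I_n}) (F : nat -> R) :
  \sum_(B | P B) F #|B| = \sum_(x < n.+1) #|[set B | P B & #|B| == x]|%:R * F x.
Proof.
have cB (B : {set 'I_n}) : (#|B| < n.+1)%N by rewrite ltnS card_set_le.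
rewrite (partition_big (fun B => Ordinal (cB B)) xpredT) //=.
apply: eq_bigr => x _.
rewrite mulr_natl -sumr_const /= [RHS]big_mkcond /= [LHS]big_mkcond /=.
apply: eq_bigr => B _; rewrite inE.
case: (P B) => //=.
case: eqP => [<-|ne]; first by rewrite eqxx.
by case: eqP => // e; case: ne; apply: val_inj.
Qed.

Lemma card_sized_le_bin (P : pred {set 'I_n}) x :
  (#|[set B | P B & #|B| == x]| <= 'C(n, x))%N.
Proof.
rewrite -[X in 'C(X, _)](card_ord n) -card_draws.
by apply: subset_leq_card; apply/fintype.subsetP => B; rewrite !inE => /andP [].
Qed.

Lemma size_distr_ge0 k x : (k < m)%N -> (x <= n)%N -> 0 <= f k x.
Proof. by move=> km xn; case: (f_distr k km) => h _; apply: h. Qed.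

(* P(V_k = B); nonnegative and summing to one over B. *)
Definition edge_weight (k : nat) (B : {set 'I_n}) : R :=
  f k #|B| / ('C(n, #|B|))%:R.

Lemma edge_weight_ge0 k B : (k < m)%N -> 0 <= edge_weight k B.
Proof. by move=> km; rewrite divr_ge0 // size_distr_ge0 // card_set_le. Qed.

Lemma sum_edge_weight k : (k < m)%N -> \sum_B edge_weight k B = 1.
Proof.
move=> km.
rewrite (sum_by_card xpredT (fun x => f k x / ('C(n, x))%:R)).
transitivity (\sum_(x < n.+1) f k x); last by case: (f_distr k km).
apply: eq_bigr => x _.
have -> : #|[set B : {set 'I_n} | xpredT B & #|B| == x]| = 'C(n, x).
  rewrite -[X in 'C(X, _)](card_ord n) -card_draws.
  by apply: eq_card => B; rewrite !inE.
rewrite mulrC -mulrA mulVf ?mulr1 // pnatr_eq0 -lt0n bin_gt0 -ltnS.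
exact: ltn_ord.
Qed.

Lemma weight_ge0 A : 0 <= weight A.
Proof. by apply: prodr_ge0 => k _; apply: edge_weight_ge0. Qed.

Lemma sum_weight : \sum_A weight A = 1.
Proof.
rewrite /shotgun_weight -(bigA_distr_bigA (fun (k : 'I_m) B => edge_weight k B)) /=.
by rewrite big1 // => k _; apply: sum_edge_weight.
Qed.

Lemma prob_connected_le1 : prob_connected n m f <= 1.
Proof.
rewrite -sum_weight (bigID (fun A => hconnected A)) /= /prob_connected lerDl.
by apply: sumr_ge0 => A _; exact: weight_ge0.
Qed.

Definition crosses (S B : {set 'I_n}) : bool :=
  (B :&: S != finset.set0) && (B :&: ~: S != finset.set0).

Definition misses_cut (S : {set 'I_n}) (A : {ffun 'I_m -> {set 'I_n}}) : bool :=
  [forall k, ~~ crosses S (A k)].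

(* Up to complementation every cut has a nonempty side with |S| <= n/2. *)
Definition small_cut (S : {set 'I_n}) : bool := (0 < #|S|)%N && (#|S|.*2 <= n)%N.

Lemma crossesC S B : crosses (~: S) B = crosses S B.
Proof. by rewrite /crosses finset.setCK andbC. Qed.

Lemma card_setC_ord (S : {set 'I_n}) : #|~: S| = (n - #|S|)%N.
Proof. by rewrite cardsCs finset.setCK card_ord. Qed.

Lemma disconnected_small_cut A :
  ~~ hconnected A -> exists S, small_cut S && misses_cut S A.
Proof.
rewrite /hconnected negb_forall => /existsP [S].
rewrite negb_imply => /andP [/andP [S0 CS0]].
rewrite negb_exists => /forallP h.
have hS : misses_cut S A by apply/forallP => k; exact: h.
have S_gt0 : (0 < #|S|)%N by rewrite card_gt0.
have CS_gt0 : (0 < #|~: S|)%N by rewrite card_gt0.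
have := card_set_le S.
have [Sn _|Sn Sle] := leqP (#|S|.*2) n.
  by exists S; rewrite /small_cut S_gt0 Sn hS.
exists (~: S); rewrite /small_cut CS_gt0 card_setC_ord /=; apply/andP; split.
  by move: Sn Sle; move: #|S| => s; rewrite -!muln2; lia.
by apply/forallP => k; rewrite crossesC; move/forallP: hS; apply.
Qed.

Lemma prob_disconnected_le_union :
  1 - prob_connected n m f <= \sum_(S | small_cut S) \sum_(A | misses_cut S A) weight A.
Proof.
rewrite -sum_weight (bigID (fun A => hconnected A)) /= /prob_connected addrC addrK.
apply: (@le_trans _ _ (\sum_(A | ~~ hconnected A)
                         \sum_(S | small_cut S && misses_cut S A) weight A)).
  apply: ler_sum => A hA; have [S0 hS0] := disconnected_small_cut A hA.
  rewrite (bigD1 S0) //= lerDl; apply: sumr_ge0 => S _; exact: weight_ge0.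
apply: (@le_trans _ _ (\sum_A \sum_(S | small_cut S && misses_cut S A) weight A)).
  rewrite [X in _ <= X](bigID (fun A => ~~ hconnected A)) /= lerDl.
  by apply: sumr_ge0 => A _; apply: sumr_ge0 => S _; exact: weight_ge0.
rewrite (exchange_big_dep small_cut) /=; last by move=> A S _ /andP [].
apply: ler_sum => S hS; rewrite le_eqVlt; apply/orP; left; apply/eqP.
by apply: eq_bigl => A; rewrite hS.
Qed.

Lemma prob_misses_cut S :
  \sum_(A | misses_cut S A) weight A
  = \prod_(k < m) \sum_(B | ~~ crosses S B) edge_weight k B.
Proof.
rewrite (bigA_distr_big [pred B | ~~ crosses S B] (fun (k : 'I_m) B => edge_weight k B)) /=.
by apply: eq_bigl => A; apply/forallP/ffun_onP => h k; have := h k.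
Qed.

(* A set not crossing S lies inside S or inside its complement. *)
Lemma card_missing_le S x :
  (#|[set B | ~~ crosses S B & #|B| == x]| <= 'C(#|S|, x) + 'C(n - #|S|, x))%N.
Proof.
rewrite -cards_draws -card_setC_ord -cards_draws.
apply: leq_trans (leq_card_setU _ _); apply: subset_leq_card.
apply/fintype.subsetP => B; rewrite !inE /crosses negb_and !negbK => /andP [h ->].
rewrite !andbT !finset.setI_eq0 !finset.disjoints_subset finset.setCK in h *.
by rewrite orbC.
Qed.

Lemma missing_frac_le S x : (0 < n)%N -> (x <= n)%N ->
  #|[set B | ~~ crosses S B & #|B| == x]|%:R / ('C(n, x))%:R
  <= (#|S|%:R / n%:R) ^+ x + (1 - #|S|%:R / n%:R) ^+ x :> R.
Proof.
move=> n0 xn.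
have C0 : (0 : R) < ('C(n, x))%:R by rewrite ltr0n bin_gt0.
have -> : 1 - #|S|%:R / n%:R = (n - #|S|)%N%:R / n%:R :> R.
  by rewrite natrB ?card_set_le // mulrBl divff // pnatr_eq0 -lt0n.
apply: (@le_trans _ _ (('C(#|S|, x) + 'C(n - #|S|, x))%N%:R / ('C(n, x))%:R)).
  by apply: ler_wpM2r; [rewrite invr_ge0 ltW | rewrite ler_nat card_missing_le].
rewrite natrD mulrDl; apply: lerD; apply: bin_ratio_le => //.
  exact: card_set_le.
exact: leq_subr.
Qed.

Definition split_mass (y : R) : R :=
  \sum_(k < m) \sum_(2 <= x < n.+1) f k x * (1 - y ^+ x - (1 - y) ^+ x).

Lemma edge_misses_le k S : (k < m)%N -> (0 < n)%N ->
  \sum_(B | ~~ crosses S B) edge_weight k B <=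
  1 - \sum_(2 <= x < n.+1) f k x *
        (1 - (#|S|%:R / n%:R) ^+ x - (1 - #|S|%:R / n%:R) ^+ x).
Proof.
move=> km n0; set y : R := #|S|%:R / n%:R.
rewrite (sum_by_card (fun B => ~~ crosses S B) (fun x => f k x / ('C(n, x))%:R)).
apply: (@le_trans _ _ (\sum_(x < n.+1) f k x -
          \sum_(2 <= x < n.+1) f k x * (1 - y ^+ x - (1 - y) ^+ x))); last first.
  by case: (f_distr k km) => _ ->.
rewrite -!(big_mkord xpredT) -(big_mkord xpredT (fun x =>
  (#|[set B | ~~ crosses S B & #|B| == x]|%:R : R) * (f k x / ('C(n, x))%:R))).
rewrite !(@big_cat_nat _ _ _ 2 0 n.+1) //= -addrA; apply: lerD.
  rewrite !big_mkord; apply: ler_sum => x _.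
  have xn : (x <= n)%N by have := ltn_ord x; case: (x : nat) => // [] [] //.
  rewrite mulrC -mulrA -[X in _ <= X]mulr1; apply: ler_wpM2l; first exact: size_distr_ge0.
  have C0 : (0 : R) < ('C(n, x))%:R by rewrite ltr0n bin_gt0.
  by rewrite mulrC ler_pdivrMr // mul1r ler_nat card_sized_le_bin.
rewrite -sumrB; apply: ler_sum_nat => x /andP [x2 xn]; rewrite ltnS in xn.
rewrite mulrC -mulrA -{2}[f k x]mulr1 -mulrBr.
apply: ler_wpM2l; first exact: size_distr_ge0.
have -> : 1 - (1 - y ^+ x - (1 - y) ^+ x) = y ^+ x + (1 - y) ^+ x by lra.
by rewrite mulrC; apply: missing_frac_le.
Qed.

(* P(no hyperedge crosses S) <= exp(- split_mass(|S|/n)), using 1 - t <= e^-t. *)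
Lemma prob_misses_cut_le S : (0 < n)%N ->
  \sum_(A | misses_cut S A) weight A <= expR (- split_mass (#|S|%:R / n%:R)).
Proof.
move=> n0; rewrite prob_misses_cut -sumrN (big_morph _ (@expRD R) (@expR0 R)).
apply: ler_prod => k _; apply/andP; split.
  by apply: sumr_ge0 => B _; apply: edge_weight_ge0.
apply: le_trans (edge_misses_le k S (ltn_ord k) n0) _.
exact: expR_ge1Dx.
Qed.

Definition total_moment (r : nat) : R :=
  \sum_(k < m) \sum_(2 <= x < n.+1) (x%:R) ^+ r * f k x.

Lemma momentE r : moment n m f r = (m%:R)^-1 * total_moment r.
Proof. by []. Qed.

(* Sizes are at least 2 and at most n, so 2 M_r <= M_{r+1} <= n M_r. *)
Lemma total_moment_double r : 2 * total_moment r <= total_moment r.+1.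
Proof.
rewrite mulr_sumr; apply: ler_sum => k _; rewrite mulr_sumr.
apply: ler_sum_nat => x /andP [x2 xn].
have f0 : 0 <= f k x by apply: size_distr_ge0 => //; rewrite -ltnS.
have X2 : (2 : R) <= x%:R by rewrite ler_nat.
rewrite exprS -mulrA; set t := _ * f k x.
have t0 : 0 <= t by rewrite mulr_ge0 // exprn_ge0.
nra.
Qed.

Lemma total_moment_le_n r : total_moment r.+1 <= n%:R * total_moment r.
Proof.
rewrite mulr_sumr; apply: ler_sum => k _; rewrite mulr_sumr.
apply: ler_sum_nat => x /andP [x2 xn].
have f0 : 0 <= f k x by apply: size_distr_ge0 => //; rewrite -ltnS.
have Xn : (x%:R : R) <= n%:R by rewrite ler_nat -ltnS.
rewrite exprS -mulrA; set t := _ * f k x.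
have t0 : 0 <= t by rewrite mulr_ge0 // exprn_ge0.
nra.
Qed.

Lemma split_mass_ge_quad y : 0 <= y -> y <= 1 ->
  y * total_moment 1 - 2 * y ^+ 2 * total_moment 2 <= split_mass y.
Proof.
move=> y0 y1; rewrite !mulr_sumr -sumrB; apply: ler_sum => k _.
rewrite !mulr_sumr -sumrB; apply: ler_sum_nat => x /andP [x2 xn].
have f0 : 0 <= f k x by apply: size_distr_ge0 => //; rewrite -ltnS.
have g := @split_prob_ge_quad R y x y0 y1 x2.
rewrite -subr_ge0 in g; have := mulr_ge0 f0 g.
rewrite expr1; set X := x%:R in g *; set G := (1 - _ - _) in g *; nra.
Qed.

Lemma split_mass_ge_lin y : 0 <= y -> 2 * y <= 1 -> y * total_moment 0 <= split_mass y.
Proof.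
move=> y0 y1; rewrite !mulr_sumr; apply: ler_sum => k _.
rewrite !mulr_sumr; apply: ler_sum_nat => x /andP [x2 xn].
have f0 : 0 <= f k x by apply: size_distr_ge0 => //; rewrite -ltnS.
have g := @split_prob_ge_lin R y x y0 y1 x2.
rewrite -subr_ge0 in g; have := mulr_ge0 f0 g.
rewrite expr0 mul1r; set G := (1 - _ - _) in g *; nra.
Qed.

(* lambda = M_1 / n = (m/n) (F)_1, so that mu = ln n - lambda. *)
Definition edge_density : R := total_moment 1 / n%:R.

Definition rate_small : R := expR (1 + ln (n%:R : R) - edge_density).
Definition rate_large (C : R) : R :=
  expR 1 * C * edge_density * expR (- (2 * edge_density / C)).

Lemma small_cut_mass_le C S : (0 < n)%N -> 1 <= C ->
  total_moment 2 <= C * total_moment 0 -> 0 < total_moment 1 -> small_cut S ->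
  ('C(n, #|S|))%:R * \sum_(A | misses_cut S A) weight A
  <= rate_small ^+ #|S| + (rate_large C) ^+ #|S|.
Proof.
move=> n0 C1 M20 M1_gt0 /andP [S0 S2].
have nR : (0 : R) < n%:R by rewrite ltr0n.
have C0 : 0 < C by lra.
have M01 := total_moment_double 0.
set l := edge_density; set y : R := #|S|%:R / n%:R.
have l0 : 0 < l by rewrite divr_gt0.
have y0 : 0 <= y by rewrite divr_ge0.
have y2 : 2 * y <= 1.
  rewrite /y mulrA ler_pdivrMr // mul1r.
  have : ((#|S|.*2)%:R : R) <= n%:R by rewrite ler_nat.
  by rewrite -muln2 natrM mulrC.
have y1 : y <= 1 by lra.
have sy : #|S|%:R = y * n%:R by rewrite /y divfK ?lt0r_neq0.
have hS := prob_misses_cut_le S n0; rewrite -/y in hS.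
apply: binomial_mass_le => //.
  apply: le_trans hS _; rewrite ler_expR lerN2.
  apply: le_trans (split_mass_ge_quad y y0 y1).
  have -> : l * #|S|%:R = y * total_moment 1.
    by rewrite /l /edge_density sy; field; rewrite lt0r_neq0.
  have -> : C * l * #|S|%:R ^+ 2 / n%:R = C * y ^+ 2 * total_moment 1.
    by rewrite /l /edge_density sy; field; rewrite lt0r_neq0.
  have yy : 0 <= y ^+ 2 by rewrite sqr_ge0.
  have h1 : 0 <= y ^+ 2 * (C * total_moment 0 - total_moment 2).
    by rewrite mulr_ge0 // subr_ge0.
  have h2 : 0 <= C * y ^+ 2 * (total_moment 1 - 2 * total_moment 0).
    by rewrite mulr_ge0 ?subr_ge0 // mulr_ge0 // ltW.
  nra.
apply: le_trans hS _; rewrite ler_expR lerN2.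
apply: le_trans (split_mass_ge_lin y y0 y2).
have -> : 2 * l * #|S|%:R / C = y * (2 * total_moment 1 / C).
  by rewrite /l /edge_density sy; field; rewrite !lt0r_neq0.
apply: ler_wpM2l => //.
have M12 := total_moment_double 1.
rewrite ler_pdivrMr //; nra.
Qed.

Lemma prob_disconnected_le_rates C : (0 < n)%N -> 1 <= C ->
  total_moment 2 <= C * total_moment 0 -> 0 < total_moment 1 ->
  2 * rate_small <= 1 -> 2 * rate_large C <= 1 ->
  1 - prob_connected n m f <= 2 * rate_small + 2 * rate_large C.
Proof.
move=> n0 C1 M20 M1_gt0 a1 b1.
set a := rate_small; set b := rate_large C.
have a0 : 0 <= a by rewrite expR_ge0.
have b0 : 0 <= b by rewrite !mulr_ge0 ?expR_ge0 ?divr_ge0 ?ler0n //; [lra | exact: ltW].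
have hcut S : small_cut S ->
    \sum_(A | misses_cut S A) weight A <= (a ^+ #|S| + b ^+ #|S|) / ('C(n, #|S|))%:R.
  move=> hS; rewrite ler_pdivlMr ?ltr0n ?bin_gt0 ?card_set_le // mulrC.
  exact: small_cut_mass_le.
apply: le_trans prob_disconnected_le_union _.
apply: le_trans (ler_sum _ hcut) _.
rewrite (sum_by_card small_cut (fun s => (a ^+ s + b ^+ s) / ('C(n, s))%:R)).
apply: (@le_trans _ _ (\sum_(x < n.+1) (if (0 < x)%N then a ^+ x + b ^+ x else 0))).
  apply: ler_sum => x _; case: ifP => x0.
    have C0 : (0 : R) < ('C(n, x))%:R by rewrite ltr0n bin_gt0 -ltnS.
    rewrite mulrCA -[X in _ <= X]mulr1 ler_wpM2l ?addr_ge0 ?exprn_ge0 //.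
    by rewrite ler_pdivrMr // mul1r ler_nat card_sized_le_bin.
  have -> : #|[set B | small_cut B & #|B| == x]| = 0%N.
    apply/eqP; rewrite cards_eq0; apply/eqP/setP => B; rewrite !inE /small_cut.
    by case: (#|B| =P x) => [e|]; rewrite ?andbF // e x0.
  by rewrite mul0r.
rewrite big_ord_recl /= add0r big_split /=.
by apply: lerD; apply: geometric_sum_le.
Qed.

Lemma prob_disconnected_le C d : (0 < n)%N -> (0 < m)%N -> 1 <= C -> 0 < d ->
  d <= 1 / 4 -> moment n m f 2 / `|moment n m f 0| <= C ->
  ln (n%:R : R) - m%:R / n%:R * moment n m f 1 <= connectivity_threshold C d ->
  1 - prob_connected n m f <= 4 * d.
Proof.
move=> n0 m0 C1 d0 d4 hratio hmu.
have nR : (0 : R) < n%:R by rewrite ltr0n.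
have mR : (0 : R) < m%:R by rewrite ltr0n.
have density : m%:R / n%:R * moment n m f 1 = edge_density.
  by rewrite momentE /edge_density; field; rewrite !lt0r_neq0.
rewrite density in hmu.
rewrite le_min in hmu; case/andP: hmu => hmu_d hmu_K.
set K := expR 1 * C ^+ 3 / (2 * d) in hmu_K.
have K0 : 0 < K by rewrite divr_gt0 ?mulr_gt0 ?expR_gt0 ?exprn_gt0 //; lra.
have lnn : 0 <= ln (n%:R : R) by rewrite ln_ge0 // ler1n.
have M1_gt0 : 0 < total_moment 1.
  rewrite -(divfK (lt0r_neq0 nR) (total_moment 1)) -/edge_density.
  by rewrite mulr_gt0 //; lra.
have M0_gt0 : 0 < total_moment 0.
  by rewrite -(pmulr_rgt0 _ nR); apply: lt_le_trans (total_moment_le_n 0).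
have M20 : total_moment 2 <= C * total_moment 0.
  have mom0 : 0 < moment n m f 0 by rewrite momentE mulr_gt0 // invr_gt0.
  rewrite gtr0_norm // ler_pdivrMr // !momentE mulrCA ler_pM2l // in hratio.
  by rewrite invr_gt0.
have ha : rate_small <= d by rewrite -[X in _ <= X](lnK d0) ler_expR; lra.
have hb : rate_large C <= d by apply: decay_rate_le => //; rewrite -/K; lra.
have a1 : 2 * rate_small <= 1 by lra.
have b1 : 2 * rate_large C <= 1 by lra.
have := prob_disconnected_le_rates C n0 C1 M20 M1_gt0 a1 b1; lra.
Qed.

End Shotgun.

Local Open Scope classical_set_scope.

Theorem mainTheorem14 (R : realType) (m : nat -> nat)
  (f : nat -> nat -> nat -> R) :
  (forall n, (1 <= m n)%N) ->
  (forall n k, (k < m n)%N -> is_size_distr n (f n k)) ->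
  (exists C : R, \forall n \near \oo,
      moment n (m n) (f n) 2 / `|moment n (m n) (f n) 0| <= C) ->
  (ln (n%:R : R) - (m n)%:R / n%:R * moment n (m n) (f n) 1
     @[n --> \oo] --> -oo) ->
  prob_connected n (m n) (f n) @[n --> \oo] --> (1 : R).
Proof.
move=> m_gt0 f_distr [C hC] hmu; apply/cvgrPdist_le => eps eps0.
set C' := Num.max C 1; set d := Num.min (1 / 4) (eps / 4).
have C'1 : 1 <= C' by rewrite le_max lexx orbT.
have d0 : 0 < d by rewrite lt_min; apply/andP; split; lra.
have d4 : d <= 1 / 4 by rewrite ge_min lexx.
have d_eps : d <= eps / 4 by rewrite ge_min lexx orbT.
have hmu_le := cvgrNy_le hmu (connectivity_threshold C' d).
near=> n.
have ratio_le : moment n (m n) (f n) 2 / `|moment n (m n) (f n) 0| <= C'.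
  by apply: le_trans (_ : C <= C'); [near: n | rewrite le_max lexx].
have n0 : (0 < n)%N by near: n; exists 1%N.
have : 1 - prob_connected n (m n) (f n) <= 4 * d.
  apply: (@prob_disconnected_le R n (m n) (f n) (f_distr n) C' d) => //.
  by near: n; exact: hmu_le.
have := @prob_connected_le1 R n (m n) (f n) (f_distr n).
by move=> P_le1 disc_le; rewrite ger0_norm ?subr_ge0 //; lra.
Unshelve. all: by end_near.
Qed.
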